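(* Let $\delta,\ell,n\in\mathbb{Z}^+$ with $\ell\mid n$ and $2\delta<\ell\le n/2$. The redundancy $r_\delta(\ell,n)$ of any block-by-block decodable code $\mathcal{C}\subseteq\mathbb{F}_2^n$ that detects up to $\delta$ deletions per block satisfies $$r_\delta(\ell,n)\ge(2\delta+1)(n/\ell-1).$$
   Context: A binary string $\mathbf{x}\in\mathbb{F}_2^n$ with $\ell\mid n$ is viewed as a concatenation $\mathbf{x}=\langle\mathbf{x}^1,\dots,\mathbf{x}^{n/\ell}\rangle$ of blocks $\mathbf{x}^j=(x_{1+(j-1)\ell},\dots,x_{j\ell})\in\mathbb{F}_2^\ell$. A code $\mathcal{C}\subseteq\mathbb{F}_2^n$ detects up to $\delta$ deletions per block if there is a decoding function $\mathrm{Dec}:\mathbb{F}_2^*\to\mathbb{Z}_{\delta+1}^{n/\ell}$ such that for every $\mathbf{x}\in\mathcal{C}$ and every string $\mathbf{y}$ obtained from $\mathbf{x}$ by deleting at most $\delta$ bits from each block (worst case), $\mathrm{Dec}(\mathbf{y})=(\delta_1,\dots,\delta_{n/\ell})$ where $\delta_j$ is the exact number of bits deleted from block $\mathbf{x}^j$. Such a code is block-by-block decodable if, letting $\alpha_j$ be the starting position of block $j$ in $\mathbf{y}$ (with $\alpha_1=1$), there is a decoder which can output the exact number of deletions in any block $\mathbf{x}^j$ by only processing the bits $y_{\alpha_j},\dots,y_{\alpha_j+\ell-1}$. The redundancy of $\mathcal{C}$ is $n-\log_2|\mathcal{C}|$. *)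

From mathcomp Require Import all_boot.
Set Implicit Arguments. Unset Strict Implicit. Unset Printing Implicit Defensive.

Definition block (l : nat) (x : bitseq) (j : nat) : bitseq :=
  take l (drop (j * l) x).

(* [del_out d l m x y ds]: y is obtained from x (with m blocks of length l)
   by deleting at most d bits from each block; ds lists the exact number of
   bits deleted from each block. *)
Definition del_out (d l m : nat) (x y : bitseq) (ds : seq nat) : Prop :=
  exists ss : seq bitseq,
    [/\ size ss = m,
        forall j, j < m ->
          subseq (nth [::] ss j) (block l x j) /\
          size (block l x j) - size (nth [::] ss j) <= d,
        y = flatten ss &
        ds = [seq size (block l x j) - size (nth [::] ss j) | j <- iota 0 m]].

Definition detects (n d l : nat) (C : {set n.-tuple bool}) : Prop :=
  exists Dec : bitseq -> seq nat,
    forall (x : n.-tuple bool) y ds, x \in C ->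
      del_out d l (n %/ l) x y ds -> Dec y = ds.

(* Starting position (0-indexed) of block j in y: alpha_j - 1. *)
Definition start_pos (l : nat) (ds : seq nat) (j : nat) : nat :=
  \sum_(i < j) (l - nth 0 ds i).

(* Block-by-block decodable: the number of deletions in block j can be
   recovered from the l bits y_{alpha_j}, ..., y_{alpha_j + l - 1} alone
   (truncated if y ends earlier). *)
Definition bbb_decodable (n d l : nat) (C : {set n.-tuple bool}) : Prop :=
  exists D : nat -> bitseq -> nat,
    forall (x : n.-tuple bool) y ds, x \in C ->
      del_out d l (n %/ l) x y ds ->
      forall j, j < n %/ l ->
        D j (take l (drop (start_pos l ds j) y)) = nth 0 ds j.

From mathcomp Require Import all_boot zify.
Set Implicit Arguments. Unset Strict Implicit. Unset Printing Implicit Defensive.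

(* Delete the last l - p bits of block j (l - d <= p <= l) and the first i <= d
   bits of block j+1, and nothing else. Block j still starts at position j * l, so
   the block-by-block decoder reads the first p bits of block j followed by bits
   i, i+1, ... of block j+1, and must answer l - p. Two such windows that coincide
   but require different answers are impossible; this forces, in every codeword,
   the first d+1 bits of block j+1 to be the complement of the last bit b of block
   j, the last d bits of block j to equal b, and b to be a function of the first
   l - d bits of block j. So a codeword is determined by its bits outside the
   2d+1 positions around each of the n/l - 1 block boundaries. *)

Lemma size_block l m (x : bitseq) q : size x = m * l -> q < m -> size (block l x q) = l.
Proof.
move=> sx qm; rewrite /block size_takel // size_drop sx.
have : q.+1 * l <= m * l by rewrite leq_mul2r qm orbT.
rewrite mulSn; lia.
Qed.

Lemma nth_block l (x : bitseq) q r : r < l -> nth false (block l x q) r = nth false x (q * l + r).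
Proof. by move=> rl; rewrite /block nth_take // nth_drop. Qed.

Lemma drop_flatten_uniform T l j (ss : seq (seq T)) :
  (forall q, q < j -> size (nth [::] ss q) = l) -> drop (j * l) (flatten ss) = flatten (drop j ss).
Proof.
elim: j ss => [|j IH] [|s ss] sizes //=; first by rewrite !drop0.
have sl : size s = l by apply: (sizes 0).
rewrite mulSn drop_cat sl ltnNge leq_addr /= addKn.
by apply: IH => q qj; apply: (sizes q.+1).
Qed.

Lemma nth_flatten_uniform (T : eqType) (x0 : T) l (ss : seq (seq T)) q r :
  (forall s, s \in ss -> size s = l) -> r < l ->
  nth x0 (flatten ss) (q * l + r) = nth x0 (nth [::] ss q) r.
Proof.
elim: ss q => [|s ss IH] q sizes rl /=; first by rewrite !nth_nil.
have sl : size s = l by apply: sizes; rewrite mem_head.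
case: q => [|q]; first by rewrite nth_cat sl rl.
rewrite nth_cat sl mulSn -addnA ltnNge leq_addr /= addKn.
by apply: IH => // s' s'ss; apply: sizes; rewrite inE s'ss orbT.
Qed.

Lemma eq_in_mkseq T (f g : nat -> T) k :
  (forall r, r < k -> f r = g r) -> mkseq f k = mkseq g k.
Proof. by move=> fg; apply/eq_in_map => r; rewrite mem_iota => /fg. Qed.

Definition cut_blocks l (x : bitseq) m j p i : seq bitseq :=
  [seq if q == j then take p (block l x q)
       else if q == j.+1 then drop i (block l x q) else block l x q | q <- iota 0 m].

Definition cut_counts l m j p i : seq nat :=
  [seq if q == j then l - p else if q == j.+1 then i else 0 | q <- iota 0 m].

Definition window l (x : bitseq) j p i : bitseq :=
  mkseq (fun r => if r < p then nth false x (j * l + r)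
                  else nth false x (j.+1 * l + (i + (r - p)))) l.

Lemma nth_cut_blocks l (x : bitseq) m j p i q : q < m ->
  nth [::] (cut_blocks l x m j p i) q =
  if q == j then take p (block l x q)
  else if q == j.+1 then drop i (block l x q) else block l x q.
Proof. by move=> qm; rewrite (nth_map 0) ?size_iota // nth_iota. Qed.

Lemma del_out_cut_blocks d l m (x : bitseq) j p i :
  size x = m * l -> l - d <= p <= l -> i <= d -> d <= l ->
  del_out d l m x (flatten (cut_blocks l x m j p i)) (cut_counts l m j p i).
Proof.
move=> sx /andP[dp pl] id dl; exists (cut_blocks l x m j p i); split => //.
- by rewrite size_map size_iota.
- move=> q qm; rewrite nth_cut_blocks //.
  case: eqP => _; first by rewrite take_subseq size_takel ?(size_block sx); lia.
  case: eqP => _; first by rewrite drop_subseq size_drop (size_block sx); lia.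
  by rewrite subseq_refl subnn.
- apply/eq_in_map => q; rewrite mem_iota => /andP[_ qm].
  rewrite nth_cut_blocks // (size_block sx) //.
  case: eqP => _; first by rewrite size_takel ?(size_block sx) //; lia.
  case: eqP => _; first by rewrite size_drop (size_block sx) //; lia.
  by rewrite (size_block sx) // subnn.
Qed.

Lemma nth_cut_counts l m j p i q : q < m ->
  nth 0 (cut_counts l m j p i) q = if q == j then l - p else if q == j.+1 then i else 0.
Proof. by move=> qm; rewrite (nth_map 0) ?size_iota // nth_iota. Qed.

Lemma start_pos_cut_counts l m j p i : j <= m -> start_pos l (cut_counts l m j p i) j = j * l.
Proof.
move=> jm; rewrite /start_pos (eq_bigr (fun=> l)) ?sum_nat_const ?card_ord // => q _.
have qj := ltn_ord q.
by rewrite nth_cut_counts ?(ltn_eqF qj) ?(ltn_eqF (leqW qj)) ?subn0 //; apply: leq_trans jm.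
Qed.

Lemma take_drop_cut_blocks l m (x : bitseq) j p i :
  size x = m * l -> j.+1 < m -> p <= l -> i <= p ->
  take l (drop (j * l) (flatten (cut_blocks l x m j p i))) = window l x j p i.
Proof.
move=> sx jm pl ip.
rewrite drop_flatten_uniform => [|q qj]; last first.
  have qm : q < m by lia.
  by rewrite nth_cut_blocks // (ltn_eqF qj) (ltn_eqF (leqW qj)) (size_block sx).
rewrite -map_drop drop_iota add0n.
have -> : m - j = (m - j.+2).+2 by lia.
rewrite /= eqxx (gtn_eqF (ltnSn j)) eqxx.
have size_head : size (take p (block l x j)) = p by rewrite size_takel ?(size_block sx) //; lia.
have size_next : size (drop i (block l x j.+1)) = l - i by rewrite size_drop (size_block sx).
rewrite take_cat size_head ltnNge pl /= takel_cat ?size_next; last lia.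
apply: (eq_from_nth (x0 := false)) => [|r].
  by rewrite size_mkseq size_cat size_head size_takel ?size_next; lia.
rewrite size_cat size_head size_takel ?size_next; try lia.
move=> rl; have {}rl : r < l by lia.
rewrite nth_mkseq // nth_cat size_head.
case: ltnP => rp; first by rewrite nth_take // nth_block.
by rewrite nth_take ?nth_drop ?nth_block; lia.
Qed.

(* The zeros of [block_mask] are the positions of block q forced by the rest:
   its first d+1 bits (if q > 0) and its last d bits (if q is not the last block). *)
Definition head_len d q := if 0 < q then d.+1 else 0.
Definition tail_len m d q := if q.+1 < m then d else 0.

Definition block_mask m d l q : bitseq :=
  nseq (head_len d q) false ++ nseq (l - head_len d q - tail_len m d q) true ++
  nseq (tail_len m d q) false.

Definition code_mask m d l : bitseq := flatten [seq block_mask m d l q | q <- iota 0 m].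

Lemma size_block_mask m d l q : 2 * d < l -> size (block_mask m d l q) = l.
Proof. by rewrite /block_mask /head_len /tail_len !size_cat !size_nseq; case: ifP; case: ifP; lia. Qed.

Lemma count_block_mask m d l q :
  count id (block_mask m d l q) = l - head_len d q - tail_len m d q.
Proof. by rewrite /block_mask !count_cat !count_nseq /= mul0n mul1n addn0 add0n. Qed.

Lemma nth_block_mask_false m d l q r : 2 * d < l -> r < l -> ~~ nth false (block_mask m d l q) r ->
  (0 < q /\ r <= d) \/ (q.+1 < m /\ l - d <= r).
Proof.
rewrite /block_mask /head_len /tail_len => dl rl.
by rewrite !nth_cat !size_nseq !nth_nseq; case: ifP; case: ifP; repeat case: ifP; lia.
Qed.

Lemma nth_code_mask m d l q r : 2 * d < l -> q < m -> r < l ->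
  nth false (code_mask m d l) (q * l + r) = nth false (block_mask m d l q) r.
Proof.
move=> dl qm rl; rewrite nth_flatten_uniform // ?(nth_map 0) ?size_iota ?nth_iota //.
by move=> s /mapP[q' _ ->]; apply: size_block_mask.
Qed.

Lemma sumn_block_masks m d l (F : bitseq -> nat) :
  sumn [seq F s | s <- [seq block_mask m d l q | q <- iota 0 m]] =
  \sum_(q < m) F (block_mask m d l q).
Proof. by rewrite sumnE !big_map -{1}(subn0 m) -/(index_iota 0 m) big_mkord. Qed.

Lemma size_code_mask m d l : 2 * d < l -> size (code_mask m d l) = m * l.
Proof.
move=> dl; rewrite size_flatten /shape sumn_block_masks.
by rewrite (eq_bigr (fun=> l)) ?sum_nat_const ?card_ord // => q _; apply: size_block_mask.
Qed.

Lemma count_code_mask m d l : 2 * d < l ->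
  count id (code_mask m d l) + (2 * d + 1) * m.-1 = m * l.
Proof.
move=> dl; rewrite count_flatten sumn_block_masks.
case: m => [|[|m]]; first by rewrite big_ord0 muln0.
  by rewrite big_ord1 count_block_mask /head_len /tail_len /= !subn0 muln0 addn0 mul1n.
rewrite big_ord_recl big_ord_recr !count_block_mask.
rewrite (eq_bigr (fun=> l - d.+1 - d)) => [|q _]; last first.
  by rewrite count_block_mask lift0 /head_len /tail_len /= !ltnS ltn_ord.
rewrite sum_nat_const card_ord /head_len /tail_len /= ltnn.
nia.
Qed.

Lemma eq_mask_nth T (x0 : T) (M : bitseq) (s t : seq T) :
  size s = size M -> size t = size M -> mask M s = mask M t ->
  forall k, nth false M k -> nth x0 s k = nth x0 t k.
Proof.
elim: M s t => [|b M IH] [|a s] [|a' t] //= [sM] [tM].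
by case: b => /= [[-> /IH st] | /IH st] [|k] //=; apply: st.
Qed.

Lemma card_le_mask_determined n (C : {set n.-tuple bool}) (M : bitseq) :
  size M = n ->
  (forall x y : n.-tuple bool, x \in C -> y \in C ->
    (forall k, nth false M k -> nth false x k = nth false y k) -> x = y) ->
  #|C| <= 2 ^ count id M.
Proof.
move=> sM determined.
pose f (x : n.-tuple bool) : (count id M).-tuple bool := insubd (nseq_tuple _ false) (mask M x).
have val_f x : val (f x) = mask M x by rewrite insubdK // -topredE /= size_mask ?size_tuple.
have f_inj : {in C &, injective f}.
  move=> x y xC yC /(congr1 val); rewrite !val_f => same_mask.
  by apply: determined => //; apply: eq_mask_nth same_mask; rewrite size_tuple.
rewrite -(card_in_imset f_inj); apply: leq_trans (max_card _) _.
by rewrite card_tuple card_bool.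
Qed.

Section BlockByBlockDecoder.

Variables (n d l : nat) (C : {set n.-tuple bool}) (D : nat -> bitseq -> nat).
Hypothesis D_decodes : forall (x : n.-tuple bool) y ds, x \in C ->
  del_out d l (n %/ l) x y ds ->
  forall j, j < n %/ l -> D j (take l (drop (start_pos l ds j) y)) = nth 0 ds j.
Hypotheses (l_dvd_n : l %| n) (d_gt0 : 0 < d) (ltn_dl : 2 * d < l).

Local Notation m := (n %/ l).

Lemma size_codeword (x : n.-tuple bool) : size x = m * l.
Proof. by rewrite size_tuple divnK. Qed.

Lemma decoder_window (x : n.-tuple bool) j p i : x \in C -> j.+1 < m ->
  l - d <= p <= l -> i <= d -> D j (window l x j p i) = l - p.
Proof.
move=> xC jm dpl id; have /andP[dp pl] := dpl.
have dl : d <= l by lia.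
have cut := del_out_cut_blocks j (size_codeword x) dpl id dl.
have := D_decodes xC cut (ltnW jm).
by rewrite start_pos_cut_counts ?nth_cut_counts ?eqxx // ?take_drop_cut_blocks ?size_codeword //; lia.
Qed.

Lemma next_block_head (x : n.-tuple bool) j i : x \in C -> j.+1 < m -> i <= d ->
  nth false x (j.+1 * l + i) = ~~ nth false x (j * l + l.-1).
Proof.
move=> xC jm id; apply/negbRL/addbP; rewrite -negb_eqb; apply/eqP => same_bit.
have : window l x j l.-1 i = window l x j l 0.
  apply: eq_in_mkseq => r rl; rewrite rl; case: ltnP => // r_ge.
  have -> : r = l.-1 by lia.
  by rewrite subnn addn0 same_bit.
move/(congr1 (D j)); rewrite !decoder_window //; lia.
Qed.

Lemma block_tail_const (x : n.-tuple bool) j r : x \in C -> j.+1 < m ->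
  l - d <= r < l -> nth false x (j * l + r) = nth false x (j * l + l.-1).
Proof.
move=> xC jm /andP[dr rl]; apply/eqP; apply: contraT; rewrite negb_eqb => /addbP flip.
have : window l x j r.+1 0 = window l x j r 0.
  apply: eq_in_mkseq => s sl; rewrite !add0n.
  case: (ltngtP s r) => [sr | rs | ->]; first by rewrite ltnW.
  - by rewrite ltnS leqNgt rs /= !next_block_head //; lia.
  - by rewrite ltnSn subnn next_block_head // -flip negbK.
move/(congr1 (D j)); rewrite !decoder_window //; lia.
Qed.

Lemma block_last_bit_determined (x x' : n.-tuple bool) j : x \in C -> x' \in C -> j.+1 < m ->
  (forall r, r < l - d -> nth false x (j * l + r) = nth false x' (j * l + r)) ->
  nth false x (j * l + l.-1) = nth false x' (j * l + l.-1).
Proof.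
move=> xC x'C jm agree; apply/eqP; apply: contraT; rewrite negb_eqb => /addbP flip.
have : window l x j l 0 = window l x' j (l - d) 0.
  apply: eq_in_mkseq => r rl; rewrite rl; case: ltnP => [|dr]; first exact: agree.
  have r_tail : l - d <= r < l by rewrite dr rl.
  have head_pos : r - (l - d) <= d by lia.
  by rewrite add0n (block_tail_const xC jm r_tail) (next_block_head x'C jm head_pos) -flip negbK.
move/(congr1 (D j)); rewrite !decoder_window //; lia.
Qed.

Lemma codeword_determined_by_mask (x y : n.-tuple bool) : x \in C -> y \in C ->
  (forall k, nth false (code_mask m d l) k -> nth false x k = nth false y k) -> x = y.
Proof.
move=> xC yC agree.
have agree_free q r : q < m -> r < l -> nth false (block_mask m d l q) r ->
    nth false x (q * l + r) = nth false y (q * l + r).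
  by move=> qm rl free; apply: agree; rewrite nth_code_mask.
have agree_block q : q < m ->
    (0 < q -> forall r, r <= d -> nth false x (q * l + r) = nth false y (q * l + r)) ->
    forall r, r < l -> nth false x (q * l + r) = nth false y (q * l + r).
  move=> qm agree_head.
  have agree_low r : r < l - d -> nth false x (q * l + r) = nth false y (q * l + r).
    move=> rdl; have rl : r < l by lia.
    case: (boolP (nth false (block_mask m d l q) r)) => [|/(nth_block_mask_false ltn_dl rl)].
      exact: agree_free.
    by case=> [[q0 rd] | [_ dr]]; [apply: agree_head | lia].
  move=> r rl; case: (boolP (nth false (block_mask m d l q) r)) => [|/(nth_block_mask_false ltn_dl rl)].
    exact: agree_free.
  case=> [[q0 rd] | [qm1 dr]]; first exact: agree_head.
  have r_tail : l - d <= r < l by rewrite dr rl.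
  rewrite (block_tail_const xC qm1 r_tail) (block_tail_const yC qm1 r_tail).
  exact: block_last_bit_determined xC yC qm1 agree_low.
have agree_all q : q < m -> forall r, r < l -> nth false x (q * l + r) = nth false y (q * l + r).
  elim: q => [|q IH] qm; apply: agree_block => // _ r rd.
  by rewrite !next_block_head // IH //; lia.
apply: val_inj; apply: (eq_from_nth (x0 := false)) => [|k]; first by rewrite !size_tuple.
rewrite size_tuple => kn; have l_gt0 : 0 < l by lia.
by rewrite (divn_eq k l); apply: agree_all; rewrite ?ltn_divLR ?divnK ?ltn_mod.
Qed.

End BlockByBlockDecoder.

Theorem theorem3 (d l n : nat) (C : {set n.-tuple bool}) :
  0 < d -> 0 < l -> 0 < n -> l %| n -> 2 * d < l -> l <= n %/ 2 ->
  detects d l C -> bbb_decodable d l C ->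
  2 ^ ((2 * d + 1) * (n %/ l - 1)) * #|C| <= 2 ^ n.
Proof.
move=> d_gt0 _ _ l_dvd_n ltn_dl _ _ [D D_decodes].
have size_mask : size (code_mask (n %/ l) d l) = n by rewrite size_code_mask ?divnK.
have card_C := card_le_mask_determined size_mask
  (codeword_determined_by_mask D_decodes l_dvd_n d_gt0 ltn_dl).
rewrite -[X in _ <= 2 ^ X](divnK l_dvd_n) -(count_code_mask _ ltn_dl).
by rewrite expnD subn1 mulnC leq_mul2r card_C orbT.
Qed.
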